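(* Let $(D,\sqsubseteq)$ be a dcpo with its Scott topology and let $A\in\mathbf{\Sigma}^0_2(D)$. If $(x_i)_{i\in I}$ is a family indexed by a directed preordered set $I$ with $i\le j\Rightarrow x_i\sqsubseteq x_j$, and its supremum $\bigsqcup_i x_i$ belongs to $A$, then there is $i_0\in I$ such that $x_i\in A$ for all $i\ge i_0$. In particular, if $D$ is a continuous domain with basis $B\subseteq D$ and $x\in A$, then there exists $b\in B$ with $b\ll x$ and $\llbracket b,x]\subseteq A$.
   Context: A dcpo is a poset in which every nonempty directed subset has a supremum; its Scott topology consists of upsets $O$ such that every directed set with supremum in $O$ has an element in $O$. $\mathbf{\Sigma}^0_2(D)$: countable unions of sets $U\setminus V$ with $U,V$ Scott open. Way-below: $x\ll y$ iff for every directed $S$ with $y\sqsubseteq\sqcup S$ there is $s\in S$ with $x\sqsubseteq s$. A continuous domain with basis $B$ is a dcpo with $B\subseteq D$ such that for every $x$, $B\cap\{z:z\ll x\}$ is directed with supremum $x$. $\llbracket b,x]=\{y\in D: b\ll y\sqsubseteq x\}$. *)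

From Stdlib Require Import Classical.

Section Dcpo.
Variable D : Type.
Variable le : D -> D -> Prop.

Definition is_poset : Prop :=
  (forall x, le x x) /\
  (forall x y, le x y -> le y x -> x = y) /\
  (forall x y z, le x y -> le y z -> le x z).

Definition directed (S : D -> Prop) : Prop :=
  (exists x, S x) /\
  (forall x y, S x -> S y -> exists z, S z /\ le x z /\ le y z).

Definition is_sup (S : D -> Prop) (s : D) : Prop :=
  (forall x, S x -> le x s) /\
  (forall u, (forall x, S x -> le x u) -> le s u).

Definition is_dcpo : Prop :=
  is_poset /\ forall S, directed S -> exists s, is_sup S s.

Definition scott_open (O : D -> Prop) : Prop :=
  (forall x y, O x -> le x y -> O y) /\
  (forall S s, directed S -> is_sup S s -> O s -> exists x, S x /\ O x).

Definition sigma02 (A : D -> Prop) : Prop :=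
  exists U V : nat -> D -> Prop,
    (forall n, scott_open (U n)) /\ (forall n, scott_open (V n)) /\
    (forall x, A x <-> exists n, U n x /\ ~ V n x).

Definition way_below (x y : D) : Prop :=
  forall S s, directed S -> is_sup S s -> le y s -> exists z, S z /\ le x z.

Definition continuous_basis (B : D -> Prop) : Prop :=
  forall x, directed (fun z => B z /\ way_below z x) /\
            is_sup (fun z => B z /\ way_below z x) x.
End Dcpo.

Definition directed_preorder (I : Type) (leI : I -> I -> Prop) : Prop :=
  (forall i, leI i i) /\ (forall i j k, leI i j -> leI j k -> leI i k) /\
  (exists i : I, True) /\ (forall i j, exists k, leI i k /\ leI j k).


(* Write A as the union of differences U_n \ V_n of Scott open sets.  Every
   Scott open set is an upper set, so a difference U \ V contains every y lying
   between a point p of U and a point q outside V (p <= y <= q); this single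
   observation drives both parts.
   - For a monotone net (x_i) with supremum s in U_n \ V_n, Scott openness of
     U_n gives an index i0 with x_{i0} in U_n; every later x_i lies between
     x_{i0} and s, hence in U_n \ V_n.
   - For x in U_n \ V_n in a continuous domain, the basis elements way below x
     form a directed set with supremum x, so one of them, b, lies in U_n; every
     y with b << y <= x lies between b and x, since b << y implies b <= y. *)

Section ScottDifferences.
Variable D : Type.
Variable le : D -> D -> Prop.
(* Reflexivity is the only order axiom the argument needs. *)
Hypothesis le_refl : forall x, le x x.

Lemma between_in_difference (U V : D -> Prop) (p y q : D) :
  scott_open D le U -> scott_open D le V ->
  U p -> ~ V q -> le p y -> le y q -> U y /\ ~ V y.
Proof.
  intros [U_up _] [V_up _] Up nVq Hpy Hyq.
  split.
  - exact (U_up p y Up Hpy).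
  - intro Vy. exact (nVq (V_up y q Vy Hyq)).
Qed.

Lemma monotone_range_directed (I : Type) (leI : I -> I -> Prop) (x : I -> D) :
  directed_preorder I leI ->
  (forall i j, leI i j -> le (x i) (x j)) ->
  directed D le (fun y => exists i, y = x i).
Proof.
  intros [_ [_ [[i1 _] upper_bound]]] x_mono.
  split.
  - exists (x i1). exists i1. reflexivity.
  - intros a b [i ->] [j ->].
    destruct (upper_bound i j) as [k [Hik Hjk]].
    exists (x k). split; [exists k; reflexivity | split; auto].
Qed.

Lemma scott_open_eventually (U : D -> Prop)
  (I : Type) (leI : I -> I -> Prop) (x : I -> D) (s : D) :
  scott_open D le U -> directed_preorder I leI ->
  (forall i j, leI i j -> le (x i) (x j)) ->
  is_sup D le (fun y => exists i, y = x i) s -> U s ->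
  exists i0, U (x i0).
Proof.
  intros [_ U_inacc] HI x_mono s_sup Us.
  pose proof (monotone_range_directed I leI x HI x_mono) as range_dir.
  destruct (U_inacc _ s range_dir s_sup Us) as [y [[i0 ->] Ui0]].
  exists i0. exact Ui0.
Qed.

(* Way-below implies below, using the singleton directed set {y}. *)
Lemma way_below_le (b y : D) : way_below D le b y -> le b y.
Proof.
  intro Hby.
  destruct (Hby (fun z => z = y) y) as [z [-> Hbz]].
  - split; [exists y; reflexivity |].
    intros a c -> ->. exists y. auto.
  - split; [intros a ->; apply le_refl | intros u Hu; apply Hu; reflexivity].
  - apply le_refl.
  - exact Hbz.
Qed.

Lemma scott_open_basis_point (B U : D -> Prop) (x : D) :
  continuous_basis D le B -> scott_open D le U -> U x ->
  exists b, B b /\ way_below D le b x /\ U b.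
Proof.
  intros HB [_ U_inacc] Ux.
  destruct (HB x) as [approx_dir approx_sup].
  destruct (U_inacc _ x approx_dir approx_sup Ux) as [b [[Bb Hbx] Ub]].
  exists b. auto.
Qed.

Lemma sigma02_net_eventually (A : D -> Prop)
  (I : Type) (leI : I -> I -> Prop) (x : I -> D) (s : D) :
  sigma02 D le A -> directed_preorder I leI ->
  (forall i j, leI i j -> le (x i) (x j)) ->
  is_sup D le (fun y => exists i, y = x i) s -> A s ->
  exists i0, forall i, leI i0 i -> A (x i).
Proof.
  intros [U [V [U_open [V_open HA]]]] HI x_mono s_sup As.
  destruct (proj1 (HA s) As) as [n [Un_s nVn_s]].
  destruct (scott_open_eventually (U n) I leI x s (U_open n) HI x_mono s_sup Un_s)
    as [i0 Un_i0].
  exists i0. intros i Hi.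
  apply HA. exists n.
  apply (between_in_difference (U n) (V n) (x i0) (x i) s); auto.
  destruct s_sup as [s_upper _].
  apply s_upper. exists i. reflexivity.
Qed.

Lemma sigma02_basic_interval (A B : D -> Prop) (x : D) :
  sigma02 D le A -> continuous_basis D le B -> A x ->
  exists b, B b /\ way_below D le b x /\
    (forall y, way_below D le b y -> le y x -> A y).
Proof.
  intros [U [V [U_open [V_open HA]]]] HB Ax.
  destruct (proj1 (HA x) Ax) as [n [Un_x nVn_x]].
  destruct (scott_open_basis_point B (U n) x HB (U_open n) Un_x)
    as [b [Bb [Hbx Un_b]]].
  exists b. split; [exact Bb | split; [exact Hbx |]].
  intros y Hby Hyx.
  apply HA. exists n.
  apply (between_in_difference (U n) (V n) b y x); auto.
  exact (way_below_le b y Hby).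
Qed.

End ScottDifferences.

Theorem proposition4p4 (D : Type) (le : D -> D -> Prop) (A : D -> Prop) :
  is_dcpo D le -> sigma02 D le A ->
  (forall (I : Type) (leI : I -> I -> Prop) (x : I -> D) (s : D),
     directed_preorder I leI ->
     (forall i j, leI i j -> le (x i) (x j)) ->
     is_sup D le (fun y => exists i, y = x i) s ->
     A s ->
     exists i0, forall i, leI i0 i -> A (x i)) /\
  (forall B : D -> Prop, continuous_basis D le B ->
     forall x, A x ->
     exists b, B b /\ way_below D le b x /\
       (forall y, way_below D le b y -> le y x -> A y)).
Proof.
  intros [[le_refl _] _] HA.
  split.
  - intros I leI x s HI x_mono s_sup As.
    exact (sigma02_net_eventually D le A I leI x s HA HI x_mono s_sup As).
  - intros B HB x Ax.
    exact (sigma02_basic_interval D le le_refl A B x HA HB Ax).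
Qed.
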